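(* Let $(X,\le)$ be a partially ordered set, $K_x=\{y\in X:y\le x\}$, and $\tau_\le$ the topology generated by the sets $K_x$ and $X\setminus K_x$, $x\in X$. If $(X,\tau_\le)$ is compact, then $(X,\tau_\le,\le)$ is a Noetherian Priestley space.
   Context: A Priestley space is a partially ordered set with a quasi-compact topology such that whenever $y\not\le x$ there is a clopen down-set containing $x$ but not $y$. It is Noetherian if every decreasing sequence of closed down-sets is eventually stationary (equivalently the topology of open up-sets is Noetherian). *)

From Stdlib Require Import List.

Section Priestley.
Variable X : Type.
Variable le : X -> X -> Prop.

Definition is_partial_order : Prop :=
  (forall x, le x x) /\
  (forall x y, le x y -> le y x -> x = y) /\
  (forall x y z, le x y -> le y z -> le x z).

Definition Kset (x : X) : X -> Prop := fun y => le y x.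

Definition tau_le_subbasis (S : X -> Prop) : Prop :=
  exists x, (forall y, S y <-> Kset x y) \/ (forall y, S y <-> ~ Kset x y).

(** Open sets of the topology generated by a subbasis [sub]: every point of
    U lies in a finite intersection of subbasic sets contained in U
    (the empty intersection being X). *)
Definition generated_open (sub : (X -> Prop) -> Prop) (U : X -> Prop) : Prop :=
  forall u, U u -> exists l : list (X -> Prop),
    (forall S, In S l -> sub S) /\
    (forall S, In S l -> S u) /\
    (forall v, (forall S, In S l -> S v) -> U v).

Definition tau_le_open : (X -> Prop) -> Prop := generated_open tau_le_subbasis.

Variable is_open : (X -> Prop) -> Prop.

Definition is_closed (C : X -> Prop) : Prop := is_open (fun x => ~ C x).
Definition is_clopen (C : X -> Prop) : Prop := is_open C /\ is_closed C.
Definition is_downset (D : X -> Prop) : Prop :=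
  forall x y, le y x -> D x -> D y.

Definition quasi_compact : Prop :=
  forall (I : Type) (U : I -> X -> Prop),
    (forall i, is_open (U i)) ->
    (forall x, exists i, U i x) ->
    exists l : list I, forall x, exists i, In i l /\ U i x.

Definition priestley_space : Prop :=
  is_partial_order /\ quasi_compact /\
  (forall x y, ~ le y x ->
     exists D, is_clopen D /\ is_downset D /\ D x /\ ~ D y).

Definition noetherian : Prop :=
  forall C : nat -> X -> Prop,
    (forall n, is_closed (C n) /\ is_downset (C n)) ->
    (forall n x, C (S n) x -> C n x) ->
    exists N, forall n, N <= n -> forall x, C n x <-> C N x.

Definition noetherian_priestley_space : Prop :=
  priestley_space /\ noetherian.

End Priestley.

From Stdlib Require Import List Classical.

(* Each K_x is clopen in tau_le, so K_x itself separates x from any y not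
   below x.  For a decreasing chain of closed down-sets C_n with intersection
   C, the sets X \ C_n together with the K_z, z in C, form an open cover;
   a finite subcover puts some C_N inside the down-set C, hence C_n = C_N
   for all n >= N. *)

Lemma generated_open_subbasic {X : Type} (sub : (X -> Prop) -> Prop)
    (S : X -> Prop) :
  sub S -> generated_open X sub S.
Proof.
  intros HS u Su. exists (S :: nil). split; [|split].
  - intros T [<- | []]. exact HS.
  - intros T [<- | []]. exact Su.
  - intros v Hv. apply Hv. left. reflexivity.
Qed.

Lemma Kset_tau_clopen {X : Type} (le : X -> X -> Prop) (x : X) :
  is_clopen X (tau_le_open X le) (Kset X le x).
Proof.
  split; apply generated_open_subbasic; exists x; [left | right]; tauto.
Qed.

Lemma Kset_downset {X : Type} {le : X -> X -> Prop} (x : X) :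
  is_partial_order X le -> is_downset X le (Kset X le x).
Proof.
  intros (_ & _ & le_trans) a b Hba Hax. exact (le_trans b a x Hba Hax).
Qed.

Lemma priestley_of_clopen_Kset {X : Type} {le : X -> X -> Prop}
    {is_open : (X -> Prop) -> Prop} :
  is_partial_order X le -> quasi_compact X is_open ->
  (forall x, is_clopen X is_open (Kset X le x)) ->
  priestley_space X le is_open.
Proof.
  intros Hpo Hqc HK. split; [exact Hpo | split; [exact Hqc |]].
  intros x y Hyx. exists (Kset X le x).
  split; [exact (HK x) |].
  split; [exact (Kset_downset x Hpo) |].
  split; [apply (proj1 Hpo) | exact Hyx].
Qed.

Lemma decreasing_chain_le {X : Type} {C : nat -> X -> Prop} :
  (forall n x, C (S n) x -> C n x) ->
  forall m n x, m <= n -> C n x -> C m x.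
Proof. intros Hdec m n x Hmn. induction Hmn; auto. Qed.

Lemma list_inl_bounded {B : Type} (l : list (nat + B)) :
  exists N, forall m, In (inl m) l -> m <= N.
Proof.
  set (g := fun i : nat + B => match i with inl m => m | inr _ => 0 end).
  exists (list_max (map g l)). intros m Hm.
  assert (Hmax : Forall (fun k => k <= list_max (map g l)) (map g l))
    by (apply list_max_le; constructor).
  rewrite Forall_forall in Hmax.
  exact (Hmax (g (inl m)) (in_map g l (inl m) Hm)).
Qed.

Section OpenPrincipalDownsets.

Variables (X : Type) (le : X -> X -> Prop) (is_open : (X -> Prop) -> Prop).
Hypothesis le_refl : forall x, le x x.
Hypothesis compact : quasi_compact X is_open.
Hypothesis Kset_open : forall x, is_open (Kset X le x).

Variable C : nat -> X -> Prop.
Hypothesis C_closed : forall n, is_closed X is_open (C n).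
Hypothesis C_decreasing : forall n x, C (S n) x -> C n x.

Let C_inf (z : X) : Prop := forall m, C m z.

(* Indexing the K_z by points of the intersection (rather than by all z)
   keeps every member of the cover literally of the form K_z, as [is_open]
   need not respect extensional equality of sets. *)
Let cover (i : nat + {z : X | C_inf z}) (y : X) : Prop :=
  match i with
  | inl m => ~ C m y
  | inr z => Kset X le (proj1_sig z) y
  end.

Lemma cover_open (i : nat + {z : X | C_inf z}) : is_open (cover i).
Proof. destruct i as [m | z]; [apply C_closed | apply Kset_open]. Qed.

Lemma cover_covers (x : X) : exists i, cover i x.
Proof.
  destruct (classic (C_inf x)) as [Hx | Hx].
  - exists (inr (exist _ x Hx)). apply le_refl.
  - apply not_all_ex_not in Hx. destruct Hx as [m Hm]. exists (inl m). exact Hm.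
Qed.

Lemma chain_stage_below_intersection :
  exists N, forall x, C N x -> exists z, le x z /\ C_inf z.
Proof.
  destruct (compact _ cover cover_open cover_covers) as [l Hl].
  destruct (list_inl_bounded l) as [N HN].
  exists N. intros x HxN.
  destruct (Hl x) as [[m | [z Hz]] [Hin Hx]]; simpl in Hx.
  - exfalso. apply Hx.
    exact (decreasing_chain_le C_decreasing m N x (HN m Hin) HxN).
  - exists z. split; assumption.
Qed.

End OpenPrincipalDownsets.

Lemma noetherian_of_open_Kset {X : Type} {le : X -> X -> Prop}
    {is_open : (X -> Prop) -> Prop} :
  (forall x, le x x) -> quasi_compact X is_open ->
  (forall x, is_open (Kset X le x)) ->
  noetherian X le is_open.
Proof.
  intros le_refl Hqc HK C HC Hdec.
  destruct (@chain_stage_below_intersection X le is_open le_refl Hqc HK C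
              (fun n => proj1 (HC n)) Hdec) as [N HN].
  exists N. intros n Hn x. split.
  - exact (decreasing_chain_le Hdec N n x Hn).
  - intros HxN. destruct (HN x HxN) as (z & Hxz & Hz).
    exact (proj2 (HC n) z x Hxz (Hz n)).
Qed.

Theorem proposition3p13 (X : Type) (le : X -> X -> Prop) :
  is_partial_order X le ->
  quasi_compact X (tau_le_open X le) ->
  noetherian_priestley_space X le (tau_le_open X le).
Proof.
  intros Hpo Hqc. split.
  - exact (priestley_of_clopen_Kset Hpo Hqc (Kset_tau_clopen le)).
  - exact (noetherian_of_open_Kset (proj1 Hpo) Hqc
             (fun x => proj1 (Kset_tau_clopen le x))).
Qed.
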